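(* Let $\mathcal{H}=(\mathbb{C}^3)^{\otimes 3}$, $E_3=\mathrm{diag}(1,-1,0)$, $\mathcal{L}oc=\{\, i(L\otimes \mathbf{1}\otimes \mathbf{1}+\mathbf{1}\otimes L\otimes \mathbf{1}+\mathbf{1}\otimes\mathbf{1}\otimes L) : L \text{ traceless Hermitian } 3\times 3\,\}$ and $H=E_3\otimes E_3\otimes \mathbf{1}+E_3\otimes \mathbf{1}\otimes E_3+\mathbf{1}\otimes E_3\otimes E_3$. Let $\mathcal{L}$ be the real Lie algebra generated by $\mathcal{L}oc$ and $iH$, and let $\mathrm{Sym}\subseteq\mathcal H$ be the $10$-dimensional symmetric subspace (vectors invariant under all permutations of the tensor factors), which is invariant under $\mathcal L$. Then for every traceless skew-Hermitian operator $X$ on $\mathrm{Sym}$ there exists $Y\in\mathcal{L}$ whose restriction to $\mathrm{Sym}$ equals $X$; i.e., $\mathcal L$ restricted to $\mathrm{Sym}$ contains all of $su(10)$. *)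

From mathcomp Require Import all_boot all_order all_algebra all_fingroup all_field.
Set Implicit Arguments. Unset Strict Implicit. Unset Printing Implicit Defensive.
Import Order.TTheory GRing.Theory Num.Theory.
Local Open Scope ring_scope.

(* H = (C^3)^{(x)3} = C^27; the basis index i : 'I_27 is identified with the
   triple of digits (i1,i2,i3) : 'I_3^3 via i = 9*i1 + 3*i2 + i3. *)
Definition dig (i : 'I_27) (k : 'I_3) : 'I_3 :=
  inord ((i %/ 3 ^ (2 - k)) %% 3).
Definition enc (f : 'I_3 -> 'I_3) : 'I_27 :=
  inord (9 * f ord0 + 3 * f (inord 1) + f (inord 2)).

Definition kron3 (A B C : 'M[algC]_3) : 'M[algC]_27 :=
  \matrix_(i, j) (A (dig i ord0) (dig j ord0) * B (dig i (inord 1)) (dig j (inord 1))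
                  * C (dig i (inord 2)) (dig j (inord 2))).

Definition adjm {m n} (A : 'M[algC]_(m, n)) : 'M[algC]_(n, m) := (map_mx Num.conj A)^T.

Definition E3 : 'M[algC]_3 := diag_mx (\row_(i < 3) [:: 1; -1; 0]`_i).

Definition Hmat : 'M[algC]_27 :=
  kron3 E3 E3 1%:M + kron3 E3 1%:M E3 + kron3 1%:M E3 E3.

Definition Loc (A : 'M[algC]_27) : Prop :=
  exists L : 'M[algC]_3, adjm L = L /\ \tr L = 0 /\
    A = 'i *: (kron3 L 1%:M 1%:M + kron3 1%:M L 1%:M + kron3 1%:M 1%:M L).

Definition gens (A : 'M[algC]_27) : Prop := Loc A \/ A = 'i *: Hmat.

Inductive lie_gen {n} (S : 'M[algC]_n -> Prop) : 'M[algC]_n -> Prop :=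
| lie_base A : S A -> lie_gen S A
| lie_add A B : lie_gen S A -> lie_gen S B -> lie_gen S (A + B)
| lie_scale (c : algC) A : c \is Num.real -> lie_gen S A -> lie_gen S (c *: A)
| lie_bracket A B : lie_gen S A -> lie_gen S B -> lie_gen S (A *m B - B *m A).

Definition in_Sym (v : 'cV[algC]_27) : Prop :=
  forall (s : 'S_3) (i : 'I_27), v (enc (fun k => dig i (s k))) ord0 = v i ord0.

(* The symmetric subspace Sym of (C^3)^(x)3 has the orthogonal basis of indicator vectors of
   the ten orbits of S_3 acting on the digit triples 'I_27; let W be the 27 x 10 matrix of this
   basis and G = W^* W = diag(orbit sizes) its Gram matrix.  In this basis an operator on Sym
   is a 10 x 10 matrix R, and the R that are restrictions of some Y in L (Y W = W R) form a real
   Lie algebra.  Traceless skew-Hermitian operators on Sym correspond to the R with G R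
   skew-Hermitian and tr R = 0, a real space spanned by explicit elementary matrices.  Each of
   these is, up to a nonzero integer factor, the restriction of an explicit integer combination
   of iterated brackets of the generators iLoc(E_01 + E_10), iLoc(E_12 + E_21), iLoc(E3) and
   iH, which is checked by exact computation over the Gaussian integers.  Finally an
   orthonormal basis V of Sym is V = W C with C^* G C = 1, and X is the restriction of Y
   whenever C X C^* G is. *)

From Stdlib Require Import ZArith.
From mathcomp Require Import all_boot all_order all_algebra all_fingroup all_field.
From mathcomp Require Import ssrZ ring zify.
Set Implicit Arguments.
Unset Strict Implicit.
Unset Printing Implicit Defensive.
Import Order.TTheory GRing.Theory Num.Theory.
Local Open Scope ring_scope.

Lemma adjmE m n (A : 'M[algC]_(m, n)) i j : adjm A i j = (A j i)^*.
Proof. by rewrite !mxE. Qed.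

Lemma adjmK m n (A : 'M[algC]_(m, n)) : adjm (adjm A) = A.
Proof. by apply/matrixP => i j; rewrite !adjmE conjCK. Qed.

Lemma adjmM m n p (A : 'M[algC]_(m, n)) (B : 'M[algC]_(n, p)) :
  adjm (A *m B) = adjm B *m adjm A.
Proof. by rewrite /adjm map_mxM trmx_mul. Qed.

Lemma adjm_diag_real n (d : 'rV[algC]_n) :
  (forall i, d 0 i \is Num.real) -> adjm (diag_mx d) = diag_mx d.
Proof.
move=> d_real; apply/matrixP => i j; rewrite adjmE !mxE eq_sym.
by case: eqP => [->|_]; rewrite ?mulr1n ?mulr0n ?conjC0 // conj_Creal.
Qed.

Definition indicator_mx p q (f : 'I_p -> 'I_q) : 'M[algC]_(p, q) :=
  \matrix_(i, m) (f i == m)%:R.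

Lemma indicator_mx_rowsub p q k (f : 'I_p -> 'I_q) (r : 'I_q -> 'I_p) (A : 'M[algC]_(p, k)) :
  (forall i j, A (r (f i)) j = A i j) -> indicator_mx f *m rowsub r A = A.
Proof.
move=> A_const; apply/matrixP => i j; rewrite !mxE (bigD1 (f i)) //= big1 => [|m /negbTE fim].
  by rewrite !mxE eqxx mul1r addr0 A_const.
by rewrite !mxE eq_sym fim mul0r.
Qed.

Lemma matrix_sum_upper_delta n (M : 'M[algC]_n) :
  M = \sum_(a < n) \sum_(b < n)
        (if (a < b)%N then M a b *: delta_mx a b + M b a *: delta_mx b a else 0)
      + \sum_(a < n) M a a *: delta_mx a a.
Proof.
pose T (a b : 'I_n) := M a b *: delta_mx a b.
have upper : \sum_(a < n) \sum_(b < n) (if (a < b)%N then T a b + T b a else 0)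
    = \sum_(a < n) \sum_(b < n) (if (a < b)%N then T a b else 0)
      + \sum_(a < n) \sum_(b < n) (if (b < a)%N then T a b else 0).
  rewrite [X in _ = _ + X]exchange_big -big_split; apply: eq_bigr => a _.
  by rewrite -big_split; apply: eq_bigr => b _ /=; case: ifP; rewrite ?addr0.
rewrite upper {1}(matrix_sum_delta M) -!big_split /=; apply: eq_bigr => a _.
rewrite -big_split /= [in RHS](bigD1 a) //= ltnn addr0 add0r (bigD1 a) //= addrC.
congr (_ + _); apply: eq_bigr => b /negbTE ba; rewrite /T.
case: ltngtP => [_|_|/val_inj ab]; rewrite ?addr0 ?add0r //.
by rewrite ab eqxx in ba.
Qed.

Section WeightedSkewHermitian.

Variables (n : nat) (g : 'I_n.+1 -> algC).
Hypotheses (g_real : forall a, g a \is Num.real) (g_neq0 : forall a, g a != 0).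

Definition skew_re (a b : 'I_n.+1) : 'M[algC]_n.+1 :=
  (g a)^-1 *: delta_mx a b - (g b)^-1 *: delta_mx b a.
Definition skew_im (a b : 'I_n.+1) : 'M[algC]_n.+1 :=
  'i *: ((g a)^-1 *: delta_mx a b + (g b)^-1 *: delta_mx b a).
Definition diag_im (a : 'I_n.+1) : 'M[algC]_n.+1 := 'i *: (delta_mx a a - delta_mx ord0 ord0).

Variable P : 'M[algC]_n.+1 -> Prop.
Hypotheses (P0 : P 0) (PD : forall A B, P A -> P B -> P (A + B))
  (PZ : forall c A, c \is Num.real -> P A -> P (c *: A)).
Hypotheses (P_re : forall a b : 'I_n.+1, (a < b)%N -> P (skew_re a b))
  (P_im : forall a b : 'I_n.+1, (a < b)%N -> P (skew_im a b)) (P_diag : forall a, P (diag_im a)).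

Lemma weighted_skew_ind R :
  adjm (diag_mx (\row_a g a) *m R) = - (diag_mx (\row_a g a) *m R) -> \tr R = 0 -> P R.
Proof.
move=> R_skew R_tr.
have skewE a b : (g a * R a b)^* = - (g b * R b a).
  by have := congr1 (fun A : 'M[algC]_n.+1 => A b a) R_skew; rewrite mul_diag_mx adjmE !mxE.
have P_sum I (r : seq I) (F : I -> 'M_n.+1) : (forall i, P (F i)) -> P (\sum_(i <- r) F i).
  by move=> PF; apply: big_ind.
have diagE : \sum_a R a a *: delta_mx a a = \sum_a R a a *: (delta_mx a a - delta_mx ord0 ord0).
  rewrite (eq_bigr _ (fun a _ => scalerBr (R a a) _ _)) sumrB -scaler_suml.
  by rewrite [\sum_a R a a]R_tr scale0r subr0.
rewrite (matrix_sum_upper_delta R) diagE; apply: PD; apply: (P_sum) => a.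
  apply: (P_sum) => b; case: ltnP => [ab|_ //].
  set z := g a * R a b.
  have -> : R a b *: delta_mx a b + R b a *: delta_mx b a
            = 'Re z *: skew_re a b + 'Im z *: skew_im a b.
    have zcE : z^* = 'Re z - 'i * 'Im z by rewrite {1}[z]Crect conjC_rect ?Creal_Re ?Creal_Im.
    have gRba : g b * R b a = - z^* by rewrite /z skewE opprK.
    have Rab : R a b = ('Re z + 'i * 'Im z) / g a by rewrite -Crect mulrC mulKf.
    have Rba : R b a = ('i * 'Im z - 'Re z) / g b by rewrite -opprB -zcE -gRba mulrC mulKf.
    by rewrite Rab Rba; apply/matrixP => i j; rewrite !mxE; ring.
  by apply: PD; apply: PZ; rewrite ?Creal_Re ?Creal_Im //; [exact: P_re | exact: P_im].
have Raa : R a a = 'i * 'Im (R a a).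
  have conjR : (R a a)^* = - R a a.
    by apply: (mulfI (g_neq0 a)); rewrite mulrN -skewE rmorphM /= (conj_Creal (g_real a)).
  by rewrite [LHS]Crect ReE conjR subrr mul0r add0r.
by rewrite Raa mulrC -scalerA; apply: PZ; [exact: Creal_Im | exact: P_diag].
Qed.

End WeightedSkewHermitian.

Lemma lie_gen0 n (S : 'M[algC]_n -> Prop) A : S A -> lie_gen S 0.
Proof. by move=> SA; rewrite -(scale0r A); apply: lie_scale (lie_base SA); exact: real0. Qed.

(* Gaussian integers as pairs of binary integers and matrices as lists of rows, so that the
   certificate below can be checked by [vm_compute]. *)

Definition zval (z : Z) : algC := (int_of_Z z)%:~R.

Lemma zvalD a b : zval (Z.add a b) = zval a + zval b.
Proof. by rewrite /zval -intrD -(rmorphD int_of_Z). Qed.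

Lemma zvalB a b : zval (Z.sub a b) = zval a - zval b.
Proof. by rewrite /zval -intrB -(rmorphB int_of_Z). Qed.

Lemma zvalM a b : zval (Z.mul a b) = zval a * zval b.
Proof. by rewrite /zval -intrM -(rmorphM int_of_Z). Qed.

Lemma zvalN a : zval (Z.opp a) = - zval a.
Proof. by rewrite /zval -intrN -(rmorphN int_of_Z). Qed.

Lemma zval_real z : zval z \is Num.real.
Proof. exact: realz. Qed.

Lemma zval_eq0 z : (zval z == 0) = (z == Z0).
Proof. by rewrite /zval intr_eq0 -(inj_eq (can_inj Z_of_intK)) int_of_ZK. Qed.

Lemma zval_nat n : zval (Z.of_nat n) = n%:R.
Proof. by elim: n => // n IH; rewrite Nat2Z.inj_succ -Z.add_1_r zvalD IH -natr1. Qed.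

Definition gauss := (Z * Z)%type.

Local Open Scope Z_scope.
Definition g0 : gauss := (0, 0).
Definition g1 : gauss := (1, 0).
Definition gm1 : gauss := (-1, 0).
Definition gi : gauss := (0, 1).
Definition gadd (x y : gauss) : gauss := (x.1 + y.1, x.2 + y.2).
Definition gmul (x y : gauss) : gauss := (x.1 * y.1 - x.2 * y.2, x.1 * y.2 + x.2 * y.1).
Definition gconj (x : gauss) : gauss := (x.1, - x.2).
Local Close Scope Z_scope.

Definition gauss_val (x : gauss) : algC := zval x.1 + 'i * zval x.2.

Lemma gauss_val0 : gauss_val g0 = 0.
Proof. by rewrite /gauss_val /zval /= mulr0 addr0. Qed.

Lemma gauss_val_real z : gauss_val (z, Z0) = zval z.
Proof. by rewrite /gauss_val /zval /= mulr0 addr0. Qed.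

Lemma gauss_val_imag z : gauss_val (Z0, z) = 'i * zval z.
Proof. by rewrite /gauss_val /zval /= add0r. Qed.

Lemma gauss_valD x y : gauss_val (gadd x y) = gauss_val x + gauss_val y.
Proof. by rewrite /gauss_val /= !zvalD; ring. Qed.

Lemma gauss_valM x y : gauss_val (gmul x y) = gauss_val x * gauss_val y.
Proof.
rewrite /gauss_val /= zvalB zvalD !zvalM.
have ii : 'i * 'i = -1 :> algC by rewrite -expr2 sqrCi.
by rewrite mulrDl !mulrDr !mulrA [_ * 'i * _]mulrAC ['i * _ * 'i]mulrAC ii; ring.
Qed.

Lemma gauss_val_conj x : gauss_val (gconj x) = (gauss_val x)^*.
Proof. by rewrite /gauss_val /= conjC_rect ?zval_real // zvalN mulrN. Qed.

Definition gmx := seq (seq gauss).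

Definition gmx_entry (A : gmx) (i j : nat) : gauss := nth g0 (nth [::] A i) j.

Definition mx_of_gmx m n (A : gmx) : 'M[algC]_(m, n) := \matrix_(i, j) gauss_val (gmx_entry A i j).

Definition gmx_mk m n (f : nat -> nat -> gauss) : gmx := mkseq (fun i => mkseq (f i) n) m.

Definition gsum n (f : nat -> gauss) : gauss := foldr (fun j => gadd (f j)) g0 (iota 0 n).

Definition gmx_add m n (A B : gmx) :=
  gmx_mk m n (fun i j => gadd (gmx_entry A i j) (gmx_entry B i j)).
Definition gmx_scale m n (c : gauss) (A : gmx) := gmx_mk m n (fun i j => gmul c (gmx_entry A i j)).
Definition gmx_mul m n p (A B : gmx) :=
  gmx_mk m p (fun i k => gsum n (fun j => gmul (gmx_entry A i j) (gmx_entry B j k))).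
Definition gmx_adj m n (A : gmx) := gmx_mk n m (fun i j => gconj (gmx_entry A j i)).
Definition gmx_diag n (d : nat -> Z) := gmx_mk n n (fun i j => if i == j then (d i, Z0) else g0).
Definition gmx_delta m n (a b : nat) (x : gauss) : gmx :=
  gmx_mk m n (fun i j => if (i == a) && (j == b) then x else g0).
Arguments gmx_diag n%_N d.

Lemma mx_of_gmx_mk m n f : mx_of_gmx m n (gmx_mk m n f) = \matrix_(i, j) gauss_val (f i j).
Proof.
by apply/matrixP => i j; rewrite !mxE /gmx_entry (nth_mkseq [::]) // (nth_mkseq g0).
Qed.

Lemma mx_of_gmx_nil m n : mx_of_gmx m n [::] = 0.
Proof. by apply/matrixP => i j; rewrite !mxE /gmx_entry !nth_nil gauss_val0. Qed.

Lemma gauss_val_sum n f : gauss_val (gsum n f) = \sum_(j < n) gauss_val (f j).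
Proof.
rewrite -(big_mkord xpredT (gauss_val \o f)) /gsum /index_iota subn0.
by elim: (iota 0 n) => [|a s IH] /=; rewrite ?big_nil ?gauss_val0 // big_cons gauss_valD IH.
Qed.

Lemma mx_of_gmxD m n A B : mx_of_gmx m n (gmx_add m n A B) = mx_of_gmx m n A + mx_of_gmx m n B.
Proof. by rewrite mx_of_gmx_mk; apply/matrixP => i j; rewrite !mxE gauss_valD. Qed.

Lemma mx_of_gmxZ m n c A : mx_of_gmx m n (gmx_scale m n c A) = gauss_val c *: mx_of_gmx m n A.
Proof. by rewrite mx_of_gmx_mk; apply/matrixP => i j; rewrite !mxE gauss_valM. Qed.

Lemma mx_of_gmxM m n p A B :
  mx_of_gmx m p (gmx_mul m n p A B) = mx_of_gmx m n A *m mx_of_gmx n p B.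
Proof.
rewrite mx_of_gmx_mk; apply/matrixP => i k; rewrite !mxE gauss_val_sum.
by apply: eq_bigr => j _; rewrite !mxE gauss_valM.
Qed.

Lemma mx_of_gmx_adj m n A : mx_of_gmx n m (gmx_adj m n A) = adjm (mx_of_gmx m n A).
Proof. by rewrite mx_of_gmx_mk; apply/matrixP => i j; rewrite !mxE gauss_val_conj. Qed.

Lemma mx_of_gmx_tr n A : \tr (mx_of_gmx n n A) = gauss_val (gsum n (fun i => gmx_entry A i i)).
Proof. by rewrite gauss_val_sum; apply: eq_bigr => i _; rewrite mxE. Qed.

Lemma mx_of_gmx_diag n d : mx_of_gmx n n (gmx_diag n d) = diag_mx (\row_i zval (d i)).
Proof.
rewrite mx_of_gmx_mk; apply/matrixP => i j; rewrite !mxE -[_ == _ :> nat]/(i == j).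
by case: eqP => [->|_]; rewrite ?gauss_val_real ?mulr1n ?gauss_val0.
Qed.

Lemma mx_of_gmx_delta m n (a : 'I_m) (b : 'I_n) x :
  mx_of_gmx m n (gmx_delta m n a b x) = gauss_val x *: delta_mx a b.
Proof.
rewrite mx_of_gmx_mk; apply/matrixP => i j; rewrite !mxE.
rewrite -[(_ == _ :> nat) && _]/((i == a) && (j == b)).
by case: ifP => _; rewrite ?mulr1 ?mulr0 ?gauss_val0.
Qed.

(* A straight-line program: each instruction appends to the list of values computed so far a
   generator, the bracket of two earlier values, or an integer combination of earlier values
   (all referred to by their position). *)
Inductive lie_instr := Gen of nat | Bracket of nat & nat | Comb of seq (Z * nat).
Arguments Gen g%_N.
Arguments Bracket a%_N b%_N.

Definition gmx_bracket n (A B : gmx) : gmx :=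
  gmx_add n n (gmx_mul n n n A B) (gmx_scale n n gm1 (gmx_mul n n n B A)).

Definition lie_step n (gens vals : seq gmx) (ins : lie_instr) : gmx :=
  match ins with
  | Gen g => nth [::] gens g
  | Bracket a b => gmx_bracket n (nth [::] vals a) (nth [::] vals b)
  | Comb l => foldr (fun ck => gmx_add n n (gmx_scale n n (ck.1, Z0) (nth [::] vals ck.2))) [::] l
  end.

Definition lie_run n (gens : seq gmx) (prog : seq lie_instr) : seq gmx :=
  foldl (fun vals ins => rcons vals (lie_step n gens vals ins)) [::] prog.

Section LieRun.

Variables (n : nat) (gens : seq gmx) (P : 'M[algC]_n -> Prop).
Hypotheses (P0 : P 0) (P_gens : forall A, A \in gens -> P (mx_of_gmx n n A)).
Hypotheses (PD : forall A B, P A -> P B -> P (A + B))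
  (PZ : forall c A, c \is Num.real -> P A -> P (c *: A))
  (P_bracket : forall A B, P A -> P B -> P (A *m B - B *m A)).

Let P_nth (s : seq gmx) k :
  (forall A, A \in s -> P (mx_of_gmx n n A)) -> P (mx_of_gmx n n (nth [::] s k)).
Proof.
move=> Ps; case: (ltnP k (size s)) => [lt_k|le_k]; first by apply: Ps; rewrite mem_nth.
by rewrite nth_default // mx_of_gmx_nil.
Qed.

Lemma lie_step_closed vals ins :
  (forall A, A \in vals -> P (mx_of_gmx n n A)) -> P (mx_of_gmx n n (lie_step n gens vals ins)).
Proof.
move=> P_vals; case: ins => [g|a b|l] /=; first exact: P_nth.
  rewrite mx_of_gmxD mx_of_gmxZ !mx_of_gmxM gauss_val_real scaleN1r.
  by apply: P_bracket; apply: P_nth.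
elim: l => [|[c k] l IH] /=; first by rewrite mx_of_gmx_nil.
rewrite mx_of_gmxD mx_of_gmxZ gauss_val_real.
by apply: PD => //; apply: PZ (zval_real c) (P_nth _ _).
Qed.

Lemma lie_run_closed prog k : P (mx_of_gmx n n (nth [::] (lie_run n gens prog) k)).
Proof.
apply: P_nth; rewrite /lie_run.
have : forall A, A \in [::] -> P (mx_of_gmx n n A) by [].
elim: prog [::] => [|ins prog IH] vals P_vals //=.
apply: IH => A; rewrite mem_rcons inE => /predU1P[->|]; last exact: P_vals.
exact: lie_step_closed.
Qed.

End LieRun.

Definition digit (i k : nat) : nat := (i %/ 3 ^ (2 - k) %% 3)%N.

Lemma dig_val (i : 'I_27) (k : 'I_3) : dig i k = digit i k :> nat.
Proof. by rewrite inordK // ltn_pmod. Qed.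

Definition gmx_kron3 (A B C : gmx) : gmx :=
  gmx_mk 27 27 (fun i j => gmul (gmul (gmx_entry A (digit i 0) (digit j 0))
                                      (gmx_entry B (digit i 1) (digit j 1)))
                                (gmx_entry C (digit i 2) (digit j 2))).

Lemma mx_of_gmx_kron3 A B C :
  mx_of_gmx 27 27 (gmx_kron3 A B C)
  = kron3 (mx_of_gmx 3 3 A) (mx_of_gmx 3 3 B) (mx_of_gmx 3 3 C).
Proof.
by rewrite mx_of_gmx_mk; apply/matrixP => i j; rewrite !mxE !gauss_valM !dig_val !inordK.
Qed.

Local Open Scope Z_scope.
Definition gmx_I3 : gmx := gmx_diag 3 (fun _ => 1).
Definition gmx_E3 : gmx := gmx_diag 3 (nth 0 [:: 1; -1; 0]).
Definition gmx_X01 : gmx :=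
  [:: [:: (0, 0); (1, 0); (0, 0)]; [:: (1, 0); (0, 0); (0, 0)]; [:: (0, 0); (0, 0); (0, 0)]].
Definition gmx_X12 : gmx :=
  [:: [:: (0, 0); (0, 0); (0, 0)]; [:: (0, 0); (0, 0); (1, 0)]; [:: (0, 0); (1, 0); (0, 0)]].
Local Close Scope Z_scope.

Lemma mx_of_gmx_I3 : mx_of_gmx 3 3 gmx_I3 = 1%:M.
Proof. by rewrite mx_of_gmx_diag -diag_const_mx; congr diag_mx; apply/rowP => i; rewrite !mxE. Qed.

Lemma mx_of_gmx_E3 : mx_of_gmx 3 3 gmx_E3 = E3.
Proof.
rewrite mx_of_gmx_diag; congr diag_mx; apply/rowP => i; rewrite !mxE.
by case: i => [[|[|[|//]]] ?].
Qed.

Definition gmx_sum3 (A B C : gmx) : gmx := gmx_add 27 27 (gmx_add 27 27 A B) C.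

Definition gmx_loc (L : gmx) : gmx :=
  gmx_scale 27 27 gi
    (gmx_sum3 (gmx_kron3 L gmx_I3 gmx_I3) (gmx_kron3 gmx_I3 L gmx_I3) (gmx_kron3 gmx_I3 gmx_I3 L)).

Definition gmx_iH : gmx :=
  gmx_scale 27 27 gi
    (gmx_sum3 (gmx_kron3 gmx_E3 gmx_E3 gmx_I3) (gmx_kron3 gmx_E3 gmx_I3 gmx_E3)
              (gmx_kron3 gmx_I3 gmx_E3 gmx_E3)).

Definition generators : seq gmx := [:: gmx_loc gmx_X01; gmx_loc gmx_X12; gmx_loc gmx_E3; gmx_iH].

Lemma Loc_gmx_loc L :
  gmx_adj 3 3 L = L -> gsum 3 (fun i => gmx_entry L i i) = g0 ->
  Loc (mx_of_gmx 27 27 (gmx_loc L)).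
Proof.
move=> L_herm L_tr; exists (mx_of_gmx 3 3 L); split; first by rewrite -mx_of_gmx_adj L_herm.
split; first by rewrite mx_of_gmx_tr L_tr gauss_val0.
by rewrite mx_of_gmxZ gauss_val_imag !mx_of_gmxD !mx_of_gmx_kron3 mx_of_gmx_I3 mulr1.
Qed.

Lemma gens_generators A : A \in generators -> gens (mx_of_gmx 27 27 A).
Proof.
rewrite !inE => /or4P[] /eqP->; last first.
  right; rewrite mx_of_gmxZ gauss_val_imag mulr1 !mx_of_gmxD !mx_of_gmx_kron3.
  by rewrite mx_of_gmx_I3 mx_of_gmx_E3.
all: by left; apply: Loc_gmx_loc; vm_compute.
Qed.

(* The orbits of S_3 on 'I_27, numbered 0..9; [rep_tab] lists for each orbit its element with
   nondecreasing digits, and [orbit_size_tab] its cardinality. *)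
Definition orbit_tab : seq nat :=
  [:: 0; 1; 2; 1; 3; 4; 2; 4; 5; 1; 3; 4; 3; 6; 7; 4; 7; 8; 2; 4; 5; 4; 7; 8; 5; 8; 9].
Definition rep_tab : seq nat := [:: 0; 1; 2; 4; 5; 8; 13; 14; 17; 26].
Definition orbit_size_tab : seq nat := [:: 1; 3; 3; 3; 6; 3; 1; 3; 3; 1].

Definition orbit_of (i : 'I_27) : 'I_10 := inord (nth 0 orbit_tab i).
Definition orbit_rep (m : 'I_10) : 'I_27 := inord (nth 0 rep_tab m).
Definition orbit_size (m : 'I_10) : algC := (nth 0 orbit_size_tab m)%:R.

Local Notation W := (indicator_mx orbit_of).

Lemma orbit_tab_lt (i : 'I_27) : (nth 0 orbit_tab i < 10)%N.
Proof. by have /allP := (isT : all (fun x => x < 10)%N orbit_tab); apply; rewrite mem_nth. Qed.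

Definition gmx_W : gmx := gmx_mk 27 10 (fun i m => if nth 0 orbit_tab i == m then g1 else g0).

Lemma mx_of_gmx_W : mx_of_gmx 27 10 gmx_W = W.
Proof.
rewrite mx_of_gmx_mk; apply/matrixP => i m.
rewrite !mxE -(inj_eq val_inj) /= inordK ?orbit_tab_lt //.
by case: eqP => _; rewrite ?gauss_val_real ?gauss_val0.
Qed.

Lemma orbit_size_gt0_dvd6 (m : 'I_10) :
  ((0 < nth 0 orbit_size_tab m) && (nth 0 orbit_size_tab m %| 6))%N.
Proof.
have /allP := (isT : all (fun s => (0 < s) && (s %| 6))%N orbit_size_tab).
by apply; rewrite mem_nth.
Qed.

Lemma orbit_size_neq0 m : orbit_size m != 0.
Proof. by have /andP[s_gt0 _] := orbit_size_gt0_dvd6 m; rewrite pnatr_eq0 -lt0n. Qed.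

Lemma gram_W : adjm W *m W = diag_mx (\row_m orbit_size m).
Proof.
rewrite -mx_of_gmx_W -mx_of_gmx_adj -mx_of_gmxM.
have -> : gmx_mul 10 27 10 (gmx_adj 27 10 gmx_W) gmx_W
          = gmx_diag 10 (fun m => Z.of_nat (nth 0 orbit_size_tab m)) by vm_compute.
by rewrite mx_of_gmx_diag; congr diag_mx; apply/rowP => m; rewrite !mxE zval_nat.
Qed.

Definition swap_index (a b k : nat) : nat := if k == a then b else if k == b then a else k.

Definition swap_digits (a b i : nat) : nat :=
  (9 * digit i (swap_index a b 0) + 3 * digit i (swap_index a b 1)
   + digit i (swap_index a b 2))%N.

Definition sort2_digits (a b i : nat) : nat :=
  if (digit i b < digit i a)%N then swap_digits a b i else i.

Definition sort_digits (i : nat) : nat :=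
  sort2_digits 0 1 (sort2_digits 1 2 (sort2_digits 0 1 i)).

Lemma tperm_val (a b k : 'I_3) : tperm a b k = swap_index a b k :> nat.
Proof.
rewrite /swap_index; case: tpermP => [->|->|ka kb]; rewrite ?eqxx //.
  by case: eqP => // /val_inj.
by do 2![case: eqP => [/val_inj //|_]].
Qed.

Lemma swap_digits_lt a b i : (swap_digits a b i < 27)%N.
Proof.
have digit_lt k : (digit i k < 3)%N by exact: ltn_pmod.
rewrite /swap_digits; move: (digit_lt (swap_index a b 0)) (digit_lt (swap_index a b 1)).
move: (digit_lt (swap_index a b 2)); lia.
Qed.

Lemma sort2_digits_lt a b i : (i < 27 -> sort2_digits a b i < 27)%N.
Proof. by rewrite /sort2_digits; case: ifP => // _; rewrite swap_digits_lt. Qed.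

Lemma in_Sym_swap v a b i : in_Sym v -> (a < 3)%N -> (b < 3)%N -> (i < 27)%N ->
  v (inord (swap_digits a b i)) 0 = v (inord i) 0.
Proof.
move=> v_sym a_lt b_lt i_lt; rewrite -(v_sym (tperm (inord a) (inord b)) (inord i)) /enc.
by rewrite !dig_val !tperm_val !inordK.
Qed.

Lemma in_Sym_sort2 v a b i : in_Sym v -> (a < 3)%N -> (b < 3)%N -> (i < 27)%N ->
  v (inord (sort2_digits a b i)) 0 = v (inord i) 0.
Proof.
move=> v_sym a_lt b_lt i_lt; rewrite /sort2_digits.
by case: ifP => // _; apply: in_Sym_swap.
Qed.

Lemma orbit_repE (i : 'I_27) : orbit_rep (orbit_of i) = inord (sort_digits i).
Proof.
have /allP /(_ i) : all (fun i => sort_digits i == nth 0 rep_tab (nth 0 orbit_tab i)) (iota 0 27).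
  by vm_compute.
by rewrite mem_iota ltn_ord /orbit_rep inordK ?orbit_tab_lt // => /(_ isT) /eqP ->.
Qed.

Lemma in_Sym_orbit_rep v i : in_Sym v -> v (orbit_rep (orbit_of i)) 0 = v i 0.
Proof.
by move=> v_sym; rewrite orbit_repE /sort_digits !in_Sym_sort2 ?sort2_digits_lt // inord_val.
Qed.

(* The targets are 6 times the spanning matrices of [weighted_skew_ind] for the orbit-size
   weights, so that their entries are integers. *)
Definition six_over_size (m : nat) : Z := Z.of_nat (6 %/ nth 0 orbit_size_tab m).

Definition target_re (a b : nat) : gmx :=
  gmx_add 10 10 (gmx_delta 10 10 a b (six_over_size a, Z0))
                (gmx_delta 10 10 b a (Z.opp (six_over_size b), Z0)).
Definition target_im (a b : nat) : gmx :=
  gmx_add 10 10 (gmx_delta 10 10 a b (Z0, six_over_size a))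
                (gmx_delta 10 10 b a (Z0, six_over_size b)).
Definition target_diag (a : nat) : gmx :=
  gmx_add 10 10 (gmx_delta 10 10 a a gi) (gmx_delta 10 10 0 0 (gconj gi)).

Definition upper_pairs : seq (nat * nat) :=
  [seq (a, b) | a <- iota 0 10, b <- [seq b <- iota 0 10 | (a < b)%N]].

Definition targets : seq gmx :=
  flatten [seq [:: target_re p.1 p.2; target_im p.1 p.2] | p <- upper_pairs]
  ++ [seq target_diag a | a <- iota 1 9].

(* Precomputed: brackets of the generators followed by integer combinations of them, the last
   [size targets] of which act on Sym as [target_scales] times the [targets]. *)
Local Open Scope Z_scope.
Definition lie_prog : seq lie_instr := [::
  Gen 0; Gen 1; Gen 2; Gen 3; Bracket 1 0; Bracket 2 0; Bracket 3 0; Bracket 2 1;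
  Bracket 3 1; Bracket 2 4; Bracket 3 4; Bracket 3 5; Bracket 0 6; Bracket 1 6;
  Bracket 3 6; Bracket 1 7; Bracket 3 7; Bracket 1 8; Bracket 3 8; Bracket 3 9;
  Bracket 0 10; Bracket 1 10; Bracket 3 10; Bracket 0 11; Bracket 1 11; Bracket 3 11;
  Bracket 3 12; Bracket 1 13; Bracket 2 13; Bracket 3 13; Bracket 1 14; Bracket 3 14;
  Bracket 1 16; Bracket 3 16; Bracket 1 17; Bracket 3 17; Bracket 3 18; Bracket 0 19;
  Bracket 1 19; Bracket 3 19; Bracket 1 20; Bracket 2 20; Bracket 3 20; Bracket 0 21;
  Bracket 1 21; Bracket 2 21; Bracket 3 21; Bracket 0 22; Bracket 1 22; Bracket 3 22;
  Bracket 2 23; Bracket 3 23; Bracket 3 24; Bracket 0 25; Bracket 0 26; Bracket 1 26;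
  Bracket 3 26; Bracket 0 29; Bracket 1 29; Bracket 3 29; Bracket 1 30; Bracket 3 30;
  Bracket 0 31; Bracket 3 31; Bracket 2 32; Bracket 3 32; Bracket 1 33; Bracket 1 35;
  Bracket 3 35; Bracket 1 36; Bracket 3 36; Bracket 1 37; Bracket 3 37; Bracket 1 39;
  Bracket 3 40; Bracket 0 42; Bracket 1 42; Bracket 3 42; Bracket 0 46; Bracket 1 46;
  Bracket 3 46; Bracket 0 47; Bracket 1 47; Bracket 3 47; Bracket 1 48; Bracket 1 49;
  Bracket 0 51; Bracket 1 51; Bracket 1 52; Bracket 1 65; Bracket 3 71; Bracket 0 72;
  Bracket 1 72; Bracket 1 73; Bracket 0 74; Bracket 1 74; Bracket 0 90; Bracket 1 90;
  Bracket 1 94; Bracket 1 96;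
  Comb [:: (2, 5%N); (11, 6%N); (10, 21%N); (3, 25%N); (-1, 27%N); (5, 31%N); (6, 80%N)];
  Comb [:: (-24, 11%N); (-20, 14%N); (-48, 38%N); (24, 45%N); (-48, 46%N); (1, 63%N)];
  Comb [:: (16, 4%N); (280, 19%N); (-145, 22%N); (-68, 24%N); (56, 28%N); (-10, 29%N);
            (20, 30%N); (2, 75%N); (8, 79%N); (-3, 81%N)];
  Comb [:: (-32, 10%N); (-12, 39%N); (-44, 49%N); (3, 52%N); (-12, 59%N); (9, 61%N)];
  Comb [:: (-5, 23%N); (-6, 26%N); (-4, 32%N); (-4, 71%N); (-8, 78%N)];
  Comb [:: (-2, 51%N); (-1, 56%N)];
  Comb [:: (-192, 7%N); (-424, 8%N); (-144, 20%N); (126, 33%N); (-16, 34%N); (-15, 36%N);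
            (-90, 72%N); (-54, 77%N); (-27, 83%N)];
  Comb [:: (168, 16%N); (104, 18%N); (-60, 37%N); (12, 41%N); (36, 42%N); (12, 47%N);
            (-9, 55%N); (12, 57%N); (8, 70%N)];
  Comb [:: (-3, 23%N); (10, 26%N); (16, 32%N); (14, 35%N); (-8, 71%N); (16, 74%N); (-4, 76%N);
            (8, 78%N); (-2, 82%N)];
  Comb [:: (512, 2%N); (256, 12%N); (64, 17%N); (-128, 40%N); (640, 43%N); (-24, 50%N);
            (54, 51%N); (9, 56%N); (-192, 64%N); (-288, 65%N); (192, 66%N); (32, 69%N);
            (288, 90%N); (-96, 92%N)];
  Comb [:: (-188, 5%N); (6, 6%N); (212, 21%N); (-30, 25%N); (-50, 27%N); (6, 31%N); (12, 80%N);
            (-3, 86%N)];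
  Comb [:: (576, 0%N); (-72, 11%N); (76, 14%N); (-144, 45%N); (6, 54%N); (1, 63%N)];
  Comb [:: (16, 4%N); (-8, 19%N); (-43, 22%N); (4, 24%N); (8, 28%N); (2, 29%N); (12, 30%N);
            (6, 75%N); (8, 79%N); (-1, 81%N)];
  Comb [:: (3584, 9%N); (-1952, 10%N); (1424, 13%N); (2484, 39%N); (896, 44%N); (-644, 49%N);
            (-111, 52%N); (-252, 59%N); (171, 61%N); (216, 91%N)];
  Comb [:: (-160, 5%N); (-120, 6%N); (-640, 21%N); (18, 25%N); (56, 27%N); (-18, 31%N);
            (288, 73%N); (-72, 80%N); (64, 85%N); (9, 86%N); (-12, 88%N); (36, 96%N)];
  Comb [:: (48, 0%N); (-42, 11%N); (-4, 14%N); (-120, 38%N); (12, 45%N); (72, 46%N);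
            (-168, 48%N); (-6, 54%N); (-48, 58%N); (30, 60%N); (-1, 63%N); (-12, 94%N)];
  Comb [:: (-24, 4%N); (180, 19%N); (-109, 22%N); (-42, 24%N); (36, 28%N); (26, 29%N);
            (-4, 30%N); (-6, 75%N); (-7, 81%N); (-2, 98%N)];
  Comb [:: (-508, 9%N); (1186, 10%N); (-1048, 13%N); (-2376, 39%N); (116, 44%N); (-1160, 49%N);
            (762, 52%N); (-144, 59%N); (225, 61%N); (-432, 91%N); (-81, 99%N)];
  Comb [:: (-8, 8%N); (18, 33%N); (19, 36%N); (-6, 72%N); (6, 77%N); (-9, 83%N)];
  Comb [:: (42, 16%N); (43, 18%N); (-15, 37%N); (3, 41%N); (6, 42%N); (-9, 47%N); (4, 70%N)];
  Comb [:: (-10, 5%N); (1, 6%N); (14, 21%N); (-1, 25%N); (-3, 27%N); (1, 31%N); (2, 80%N)];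
  Comb [:: (192, 0%N); (-24, 11%N); (28, 14%N); (-48, 45%N); (1, 63%N)];
  Comb [:: (16, 4%N); (104, 19%N); (-65, 22%N); (-24, 24%N); (24, 28%N); (6, 29%N); (8, 30%N);
            (2, 75%N); (8, 79%N); (-3, 81%N)];
  Comb [:: (64, 9%N); (-16, 10%N); (16, 13%N); (36, 39%N); (16, 44%N); (-28, 49%N); (3, 52%N);
            (-12, 59%N); (9, 61%N)];
  Comb [:: (-2, 5%N); (-27, 6%N); (-26, 21%N); (3, 25%N); (1, 27%N); (-3, 31%N); (24, 73%N);
            (-6, 80%N); (8, 85%N)];
  Comb [:: (48, 0%N); (-30, 11%N); (-28, 14%N); (-72, 38%N); (12, 45%N); (-120, 48%N);
            (-24, 58%N); (18, 60%N); (-1, 63%N)];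
  Comb [:: (-5, 23%N); (-2, 26%N); (-4, 32%N); (-4, 71%N); (-8, 78%N)];
  Comb [:: (2, 51%N); (-1, 56%N)];
  Comb [:: (384, 7%N); (1064, 8%N); (288, 20%N); (-738, 33%N); (32, 34%N); (-159, 36%N);
            (342, 72%N); (-54, 77%N); (-27, 83%N)];
  Comb [:: (180, 16%N); (98, 18%N); (-66, 37%N); (18, 41%N); (24, 42%N); (6, 47%N); (-9, 55%N);
            (12, 57%N); (8, 70%N)];
  Comb [:: (-1, 23%N); (6, 26%N); (8, 32%N); (6, 35%N); (8, 74%N); (-4, 76%N); (8, 78%N);
            (-2, 82%N)];
  Comb [:: (128, 2%N); (64, 12%N); (-32, 17%N); (-32, 40%N); (160, 43%N); (-24, 50%N);
            (18, 51%N); (9, 56%N); (-48, 64%N); (-144, 65%N); (192, 66%N); (32, 69%N);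
            (144, 90%N); (-96, 92%N)];
  Comb [:: (1056, 7%N); (1792, 8%N); (792, 20%N); (1170, 33%N); (88, 34%N); (231, 36%N);
            (-558, 72%N); (54, 77%N); (27, 83%N); (-81, 87%N); (324, 89%N); (-324, 97%N)];
  Comb [:: (-186, 16%N); (-95, 18%N); (81, 37%N); (-9, 41%N); (-18, 42%N); (-3, 47%N);
            (15, 55%N); (-12, 57%N); (12, 67%N); (-8, 70%N); (12, 95%N)];
  Comb [:: (-16, 4%N); (-24, 19%N); (15, 22%N); (4, 24%N); (-8, 28%N); (22, 29%N); (-20, 30%N);
            (2, 75%N); (-8, 79%N); (-3, 81%N)];
  Comb [:: (128, 9%N); (-224, 10%N); (128, 13%N); (324, 39%N); (32, 44%N); (4, 49%N);
            (-57, 52%N); (-36, 59%N); (9, 61%N)];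
  Comb [:: (-2, 5%N); (-19, 6%N); (-10, 21%N); (1, 27%N); (-4, 31%N); (-6, 80%N)];
  Comb [:: (-4, 14%N); (24, 38%N); (-12, 45%N); (24, 46%N); (-1, 63%N)];
  Comb [:: (-16, 4%N); (-256, 19%N); (105, 22%N); (58, 24%N); (-48, 28%N); (2, 29%N);
            (-14, 30%N); (-2, 75%N); (-8, 79%N); (3, 81%N)];
  Comb [:: (16, 10%N); (-4, 39%N); (12, 49%N); (-1, 52%N); (4, 59%N); (-3, 61%N)];
  Comb [:: (1536, 7%N); (4040, 8%N); (1152, 20%N); (-2466, 33%N); (128, 34%N); (-447, 36%N);
            (1206, 72%N); (-54, 77%N); (-27, 83%N); (-81, 87%N)];
  Comb [:: (204, 16%N); (86, 18%N); (-78, 37%N); (30, 41%N); (-6, 47%N); (-3, 55%N); (12, 57%N);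
            (8, 70%N)];
  Comb [:: (1, 23%N); (4, 26%N); (4, 32%N); (4, 71%N); (8, 78%N)];
  Comb [:: (-2, 50%N); (1, 56%N)];
  Comb [:: (768, 7%N); (1480, 8%N); (576, 20%N); (306, 33%N); (64, 34%N); (87, 36%N);
            (-126, 72%N); (54, 77%N); (27, 83%N)];
  Comb [:: (-174, 16%N); (-101, 18%N); (69, 37%N); (-9, 41%N); (-30, 42%N); (-9, 47%N);
            (9, 55%N); (-12, 57%N); (-8, 70%N)];
  Comb [:: (2, 23%N); (-4, 26%N); (-10, 32%N); (-5, 35%N); (6, 71%N); (-6, 74%N); (2, 76%N);
            (-4, 78%N); (1, 82%N)];
  Comb [:: (-704, 2%N); (-352, 12%N); (-112, 17%N); (176, 40%N); (-880, 43%N); (24, 50%N);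
            (-36, 51%N); (-9, 56%N); (264, 64%N); (216, 65%N); (-192, 66%N); (-32, 69%N);
            (-216, 90%N); (96, 92%N)];
  Comb [:: (192, 7%N); (136, 8%N); (198, 33%N); (16, 34%N); (105, 36%N); (-18, 72%N);
            (18, 77%N); (-27, 83%N)];
  Comb [:: (24, 16%N); (14, 18%N); (-9, 37%N); (3, 41%N); (2, 70%N)];
  Comb [:: (-2, 32%N); (-5, 35%N); (2, 71%N); (-2, 76%N); (3, 82%N)];
  Comb [:: (-3, 64%N); (-8, 65%N); (-2, 68%N)];
  Comb [:: (2, 5%N); (-5, 6%N); (10, 21%N); (3, 25%N); (-1, 27%N); (1, 31%N); (6, 80%N)];
  Comb [:: (24, 11%N); (28, 14%N); (48, 38%N); (-24, 45%N); (48, 46%N); (1, 63%N)];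
  Comb [:: (16, 4%N); (120, 19%N); (-49, 22%N); (-28, 24%N); (24, 28%N); (22, 29%N); (-4, 30%N);
            (2, 75%N); (8, 79%N); (-3, 81%N)];
  Comb [:: (-4, 39%N); (-4, 49%N); (1, 52%N); (-4, 59%N); (3, 61%N)];
  Comb [:: (-2, 5%N); (17, 6%N); (-2, 21%N); (1, 27%N); (-1, 31%N); (-6, 80%N); (8, 85%N)];
  Comb [:: (48, 0%N); (-18, 11%N); (-40, 14%N); (-72, 38%N); (36, 45%N); (-48, 46%N);
            (-72, 48%N); (-24, 58%N); (18, 60%N); (-1, 63%N)];
  Comb [:: (16, 4%N); (16, 19%N); (-7, 22%N); (6, 24%N); (-8, 28%N); (-46, 29%N); (18, 30%N);
            (-2, 75%N); (-24, 79%N); (3, 81%N); (16, 84%N)];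
  Comb [:: (704, 9%N); (-1016, 10%N); (-160, 13%N); (540, 39%N); (-40, 44%N); (-140, 49%N);
            (-3, 52%N); (180, 59%N); (-153, 61%N); (216, 93%N)];
  Comb [:: (8, 8%N); (-14, 33%N); (-9, 36%N); (2, 72%N); (-2, 77%N); (3, 83%N)];
  Comb [:: (-66, 16%N); (-71, 18%N); (15, 37%N); (-3, 41%N); (-6, 42%N); (9, 47%N); (-8, 70%N)];
  Comb [:: (-16, 4%N); (-40, 19%N); (-1, 22%N); (8, 24%N); (-8, 28%N); (38, 29%N); (-24, 30%N);
            (2, 75%N); (-8, 79%N); (-3, 81%N)];
  Comb [:: (-64, 9%N); (112, 10%N); (-64, 13%N); (-108, 39%N); (-16, 44%N); (52, 49%N);
            (15, 52%N); (-36, 59%N); (9, 61%N)];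
  Comb [:: (-2, 5%N); (13, 6%N); (-10, 21%N); (1, 27%N); (-2, 31%N); (-6, 80%N)];
  Comb [:: (-28, 14%N); (-24, 38%N); (12, 45%N); (-24, 46%N); (-1, 63%N)];
  Comb [:: (-16, 4%N); (-144, 19%N); (57, 22%N); (38, 24%N); (-32, 28%N); (-14, 29%N);
            (-2, 30%N); (-2, 75%N); (-8, 79%N); (3, 81%N)];
  Comb [:: (-16, 10%N); (-12, 39%N); (20, 49%N); (-3, 52%N); (12, 59%N); (-9, 61%N)];
  Comb [:: (-12, 5%N); (-14, 6%N); (-52, 21%N); (-3, 25%N); (6, 27%N); (4, 31%N); (-24, 73%N);
            (12, 80%N); (-16, 85%N)];
  Comb [:: (-48, 0%N); (24, 11%N); (34, 14%N); (24, 38%N); (24, 46%N); (96, 48%N); (24, 58%N);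
            (-18, 60%N); (1, 63%N)];
  Comb [:: (-70, 5%N); (231, 6%N); (-46, 21%N); (-9, 25%N); (11, 27%N); (9, 31%N); (72, 73%N);
            (-18, 80%N); (-8, 85%N); (-12, 88%N)];
  Comb [:: (48, 0%N); (-6, 11%N); (-76, 14%N); (-120, 38%N); (84, 45%N); (-144, 46%N);
            (-24, 48%N); (24, 58%N); (-6, 60%N); (-1, 63%N)];
  Comb [:: (16, 4%N); (32, 19%N); (-7, 22%N); (-2, 24%N); (-30, 29%N); (22, 30%N); (-2, 75%N);
            (8, 79%N); (3, 81%N)];
  Comb [:: (256, 9%N); (-592, 10%N); (256, 13%N); (-108, 39%N); (64, 44%N); (-28, 49%N);
            (21, 52%N); (36, 59%N); (-9, 61%N)];
  Comb [:: (-2, 5%N); (1, 6%N); (-2, 21%N); (1, 27%N); (1, 31%N); (2, 80%N)];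
  Comb [:: (12, 11%N); (16, 14%N); (24, 45%N); (1, 63%N)];
  Comb [:: (48, 4%N); (248, 19%N); (-81, 22%N); (-60, 24%N); (48, 28%N); (6, 29%N); (8, 30%N);
            (2, 75%N); (8, 79%N); (-3, 81%N)];
  Comb [:: (16, 9%N); (-16, 10%N); (-8, 13%N); (12, 39%N); (-8, 44%N); (-28, 49%N); (3, 52%N);
            (-12, 59%N); (9, 61%N)];
  Comb [:: (8, 8%N); (6, 33%N); (17, 36%N); (-2, 72%N); (2, 77%N); (-3, 83%N)];
  Comb [:: (-42, 16%N); (-35, 18%N); (15, 37%N); (-3, 41%N); (-6, 42%N); (9, 47%N); (4, 70%N)];
  Comb [:: (-10, 32%N); (-13, 35%N); (2, 71%N); (-2, 76%N); (3, 82%N)];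
  Comb [:: (1, 64%N); (-2, 68%N)];
  Comb [:: (192, 7%N); (-536, 8%N); (18, 33%N); (-8, 34%N); (-273, 36%N); (18, 72%N);
            (-18, 77%N); (27, 83%N); (72, 89%N)];
  Comb [:: (96, 1%N); (342, 16%N); (289, 18%N); (-87, 37%N); (15, 41%N); (42, 42%N);
            (-63, 47%N); (24, 67%N); (-8, 70%N)];
  Comb [:: (-40, 8%N); (-42, 33%N); (-43, 36%N); (6, 72%N); (-6, 77%N); (9, 83%N)];
  Comb [:: (66, 16%N); (7, 18%N); (-15, 37%N); (3, 41%N); (6, 42%N); (-9, 47%N); (-8, 70%N)];
  Comb [:: (14, 32%N); (9, 35%N); (-2, 71%N); (2, 76%N); (-3, 82%N)];
  Comb [:: (-3, 64%N); (4, 65%N); (2, 68%N)];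
  Comb [:: (48, 7%N); (-32, 8%N); (126, 33%N); (-8, 34%N); (105, 36%N); (-18, 72%N); (18, 77%N);
            (-27, 83%N)];
  Comb [:: (24, 1%N); (-24, 16%N); (16, 18%N); (9, 37%N); (-3, 41%N); (4, 70%N)];
  Comb [:: (-256, 2%N); (-320, 12%N); (160, 17%N); (352, 40%N); (-704, 43%N); (-24, 50%N);
            (-36, 51%N); (36, 53%N); (-9, 56%N); (12, 62%N); (264, 64%N); (192, 65%N);
            (-192, 66%N); (48, 68%N); (-64, 69%N)];
  Comb [:: (-4352, 2%N); (-4480, 12%N); (2240, 17%N); (3824, 40%N); (-7648, 43%N); (-273, 50%N);
            (-72, 51%N); (72, 53%N); (72, 56%N); (-96, 62%N); (3093, 64%N); (2184, 65%N);
            (-2184, 66%N); (366, 68%N); (-488, 69%N)];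
  Comb [:: (-128, 2%N); (-40, 12%N); (32, 17%N); (32, 40%N); (-64, 43%N); (-3, 50%N);
            (33, 64%N); (24, 65%N); (-24, 66%N); (6, 68%N); (-8, 69%N)];
  Comb [:: (-7168, 2%N); (-7520, 12%N); (3520, 17%N); (5536, 40%N); (-11072, 43%N);
            (-492, 50%N); (-108, 51%N); (108, 53%N); (153, 56%N); (-204, 62%N); (4602, 64%N);
            (3216, 65%N); (-3216, 66%N); (444, 68%N); (-592, 69%N)];
  Comb [:: (9728, 2%N); (9760, 12%N); (-4160, 17%N); (-9056, 40%N); (18112, 43%N); (552, 50%N);
            (108, 51%N); (-108, 53%N); (-153, 56%N); (204, 62%N); (-6702, 64%N); (-3696, 65%N);
            (3696, 66%N); (-564, 68%N); (752, 69%N)];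
  Comb [:: (-2816, 2%N); (-1280, 12%N); (800, 17%N); (992, 40%N); (-1984, 43%N); (-84, 50%N);
            (-36, 51%N); (36, 53%N); (21, 56%N); (-28, 62%N); (924, 64%N); (672, 65%N);
            (-672, 66%N); (168, 68%N); (-224, 69%N)];
  Comb [:: (-2816, 2%N); (-2080, 12%N); (1280, 17%N); (1712, 40%N); (-3424, 43%N); (-129, 50%N);
            (-36, 51%N); (36, 53%N); (36, 56%N); (-48, 62%N); (1509, 64%N); (1032, 65%N);
            (-1032, 66%N); (78, 68%N); (-104, 69%N)];
  Comb [:: (2816, 2%N); (4480, 12%N); (-3200, 17%N); (-3872, 40%N); (7744, 43%N); (264, 50%N);
            (36, 51%N); (-36, 53%N); (-81, 56%N); (108, 62%N); (-3534, 64%N); (-1392, 65%N);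
            (1392, 66%N); (12, 68%N); (-16, 69%N)];
  Comb [:: (-11008, 2%N); (-8320, 12%N); (1920, 15%N); (4480, 17%N); (7456, 40%N);
            (-14912, 43%N); (-492, 50%N); (-108, 51%N); (108, 53%N); (123, 56%N); (-164, 62%N);
            (6042, 64%N); (3216, 65%N); (-3216, 66%N); (444, 68%N); (-592, 69%N)]].

Definition target_scales : seq Z := [::
  96; 192; 64; 96; 64; 128; 2592; 96; 32; 576; 192; 192; 64; 2592; 288; 96; 16; 648; 96;
  48; 32; 192; 64; 96; 48; 96; 64; 128; 2592; 96; 32; 576; 1296; 48; 64; 864; 48; 96;
  32; 16; 2592; 96; 32; 64; 1296; 48; 8; 288; 288; 24; 16; 16; 96; 192; 64; 32; 48; 96;
  32; 432; 16; 48; 64; 864; 48; 96; 32; 48; 48; 48; 144; 96; 32; 432; 8; 48; 16; 24; 32;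
  48; 16; 16; 144; 48; 48; 48; 8; 8; 72; 12; 11520; 5760; 576; 11520; 11520; 11520;
  5760; 11520; 11520].
Local Close Scope Z_scope.

Definition certifies (Y : gmx) (s : Z) (T : gmx) : bool :=
  (s != Z0) && (gmx_mul 27 27 10 Y gmx_W == gmx_scale 27 10 (s, Z0) (gmx_mul 27 10 10 gmx_W T)).

Definition certifies_targets (vals : seq gmx) : bool :=
  all (fun k => certifies (nth [::] vals (size vals - size targets + k))
                          (nth Z0 target_scales k) (nth [::] targets k))
      (iota 0 (size targets)).

Lemma lie_prog_certifies_targets : certifies_targets (lie_run 27 generators lie_prog).
Proof. by vm_compute. Qed.

Lemma lie_gen_lie_prog k :
  lie_gen gens (mx_of_gmx 27 27 (nth [::] (lie_run 27 generators lie_prog) k)).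
Proof.
apply: lie_run_closed.
- exact: (lie_gen0 (or_intror erefl : gens ('i *: Hmat))).
- by move=> A /gens_generators /lie_base.
- exact: lie_add.
- exact: lie_scale.
- exact: lie_bracket.
Qed.

Definition lie_restriction (R : 'M[algC]_10) : Prop :=
  exists2 Y, lie_gen gens Y & Y *m W = W *m R.

Lemma lie_restriction0 : lie_restriction 0.
Proof.
exists 0; rewrite ?mul0mx ?mulmx0 //.
exact: (lie_gen0 (or_intror erefl : gens ('i *: Hmat))).
Qed.

Lemma lie_restrictionD A B : lie_restriction A -> lie_restriction B -> lie_restriction (A + B).
Proof.
move=> [Y Y_lie YW] [Z Z_lie ZW]; exists (Y + Z); first exact: lie_add.
by rewrite mulmxDl mulmxDr YW ZW.
Qed.

Lemma lie_restrictionZ c A : c \is Num.real -> lie_restriction A -> lie_restriction (c *: A).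
Proof.
move=> c_real [Y Y_lie YW]; exists (c *: Y); first exact: lie_scale.
by rewrite -scalemxAl YW scalemxAr.
Qed.

Lemma lie_restrictionZ_inv c A :
  c \is Num.real -> c != 0 -> lie_restriction (c *: A) -> lie_restriction A.
Proof.
move=> c_real c_neq0; have cV_real : c^-1 \is Num.real by rewrite realV.
by move=> /(lie_restrictionZ cV_real); rewrite scalerA mulVf // scale1r.
Qed.

Lemma certified_restriction Y s T :
  certifies Y s T -> lie_gen gens (mx_of_gmx 27 27 Y) -> lie_restriction (mx_of_gmx 10 10 T).
Proof.
move=> /andP[s_neq0 /eqP YW] Y_lie.
have {}YW : mx_of_gmx 27 27 Y *m W = zval s *: (W *m mx_of_gmx 10 10 T).
  by rewrite -mx_of_gmx_W -mx_of_gmxM YW mx_of_gmxZ mx_of_gmxM gauss_val_real.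
exists ((zval s)^-1 *: mx_of_gmx 27 27 Y); first by apply: lie_scale; rewrite ?rpredV ?zval_real.
by rewrite -scalemxAl YW scalerA mulVf ?scale1r // zval_eq0.
Qed.

Lemma lie_restriction_targets T : T \in targets -> lie_restriction (mx_of_gmx 10 10 T).
Proof.
move=> T_in; have /allP /(_ (index T targets)) := lie_prog_certifies_targets.
rewrite mem_iota index_mem T_in nth_index // => /(_ isT) /certified_restriction; apply.
exact: lie_gen_lie_prog.
Qed.

Lemma zval_six_over_size (m : 'I_10) : zval (six_over_size m) = 6 / orbit_size m.
Proof.
have /andP[_ s_dvd6] := orbit_size_gt0_dvd6 m.
by rewrite zval_nat natr_div // unitfE orbit_size_neq0.
Qed.

Lemma target_reE (a b : 'I_10) : mx_of_gmx 10 10 (target_re a b) = 6 *: skew_re orbit_size a b.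
Proof.
rewrite mx_of_gmxD !mx_of_gmx_delta !gauss_val_real zvalN !zval_six_over_size.
by rewrite scalerBr !scalerA scaleNr.
Qed.

Lemma target_imE (a b : 'I_10) : mx_of_gmx 10 10 (target_im a b) = 6 *: skew_im orbit_size a b.
Proof.
rewrite mx_of_gmxD !mx_of_gmx_delta !gauss_val_imag !zval_six_over_size.
by apply/matrixP => i j; rewrite !mxE; ring.
Qed.

Lemma target_diagE (a : 'I_10) : mx_of_gmx 10 10 (target_diag a) = diag_im a.
Proof.
rewrite mx_of_gmxD (mx_of_gmx_delta a a) (mx_of_gmx_delta ord0 ord0) gauss_val_conj.
by rewrite gauss_val_imag mulr1 conjCi scaleNr -scalerBr.
Qed.

Lemma upper_pairs_mem (a b : 'I_10) : (a < b)%N -> (nat_of_ord a, nat_of_ord b) \in upper_pairs.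
Proof.
move=> ab; apply/allpairsPdep; exists (nat_of_ord a), (nat_of_ord b).
by rewrite mem_filter ab !mem_iota !ltn_ord.
Qed.

Lemma lie_restriction_skew_re (a b : 'I_10) :
  (a < b)%N -> lie_restriction (skew_re orbit_size a b).
Proof.
move=> ab; have : target_re a b \in targets.
  rewrite mem_cat; apply/orP; left; apply/flatten_mapP.
  by exists (nat_of_ord a, nat_of_ord b); rewrite ?upper_pairs_mem ?mem_head.
move/lie_restriction_targets; rewrite target_reE.
by apply: lie_restrictionZ_inv; rewrite ?realn ?pnatr_eq0.
Qed.

Lemma lie_restriction_skew_im (a b : 'I_10) :
  (a < b)%N -> lie_restriction (skew_im orbit_size a b).
Proof.
move=> ab; have : target_im a b \in targets.
  rewrite mem_cat; apply/orP; left; apply/flatten_mapP.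
  by exists (nat_of_ord a, nat_of_ord b); rewrite ?upper_pairs_mem // !inE eqxx orbT.
move/lie_restriction_targets; rewrite target_imE.
by apply: lie_restrictionZ_inv; rewrite ?realn ?pnatr_eq0.
Qed.

Lemma lie_restriction_diag_im (a : 'I_10) : lie_restriction (diag_im a).
Proof.
have [->|a_neq0] := eqVneq a ord0.
  by rewrite /diag_im subrr scaler0; exact: lie_restriction0.
rewrite -target_diagE; apply: lie_restriction_targets; rewrite mem_cat; apply/orP; right.
by apply: map_f; rewrite mem_iota lt0n a_neq0 ltn_ord.
Qed.

Lemma lie_restriction_weighted_su R :
  adjm (diag_mx (\row_m orbit_size m) *m R) = - (diag_mx (\row_m orbit_size m) *m R) ->
  \tr R = 0 -> lie_restriction R.
Proof.
apply: weighted_skew_ind.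
- by move=> m; rewrite realn.
- exact: orbit_size_neq0.
- exact: lie_restriction0.
- exact: lie_restrictionD.
- exact: lie_restrictionZ.
- exact: lie_restriction_skew_re.
- exact: lie_restriction_skew_im.
- exact: lie_restriction_diag_im.
Qed.

Theorem proposition6p2 (V : 'M[algC]_(27, 10))
  (hVsym : forall j : 'I_10, in_Sym (col j V))
  (hVon : adjm V *m V = 1%:M)
  (X : 'M[algC]_10) (hXskew : adjm X = - X) (hXtr : \tr X = 0) :
  exists Y : 'M[algC]_27, lie_gen gens Y /\ Y *m V = V *m X.
Proof.
set G := diag_mx (\row_m orbit_size m).
pose C := rowsub orbit_rep V.
have VE : V = W *m C.
  by rewrite indicator_mx_rowsub // => i j; have := in_Sym_orbit_rep i (hVsym j); rewrite !mxE.
have CGC : adjm C *m G *m C = 1%:M by rewrite /G -gram_W -hVon VE adjmM !mulmxA.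
pose R := C *m X *m adjm C *m G.
have RC : R *m C = C *m X by rewrite -!mulmxA [adjm C *m (G *m C)]mulmxA CGC mulmx1.
have G_herm : adjm G = G by apply: adjm_diag_real => m; rewrite mxE realn.
have GR_skew : adjm (G *m R) = - (G *m R).
  by rewrite !adjmM adjmK G_herm hXskew !mulmxA !(mulmxN, mulNmx).
have R_tr : \tr R = 0.
  by rewrite /R -!mulmxA mxtrace_mulC -!mulmxA [adjm C *m (G *m C)]mulmxA CGC mulmx1.
have [Y Y_lie YW] := lie_restriction_weighted_su GR_skew R_tr.
by exists Y; split => //; rewrite VE mulmxA YW -mulmxA RC mulmxA.
Qed.
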